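(* Let $\rho$, $\bar\rho$, $\sigma$ be non-negative operators on a finite-dimensional Hilbert space, and suppose $\bar\rho\le\lambda\sigma$ for some $\lambda>0$. Then for every $\epsilon\in(0,\mathrm{tr}(\rho)]$, $$D_H^\epsilon(\rho\|\sigma)\le\log_2(\lambda)-\log_2\bigl(1-\Delta(\rho,\bar\rho)/\epsilon\bigr).$$
   Context: For non-negative operators $\rho,\sigma$ and $\epsilon\in(0,\mathrm{tr}(\rho)]$, the generalised relative entropy is defined by $2^{-D_H^\epsilon(\rho\|\sigma)}=\inf\{\mathrm{tr}(Q\sigma)/\epsilon:\ 0\le Q\le \mathrm{id},\ \mathrm{tr}(Q\rho)\ge\epsilon\}$ (with value $\infty$ if the infimum is $0$). The (generalised) trace distance of non-negative operators is $\Delta(\rho,\sigma)=\frac12\|\rho-\sigma\|_1+\frac12|\mathrm{tr}(\rho-\sigma)|$. *)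

From mathcomp Require Import all_boot all_order all_algebra spectral.
From mathcomp Require Import complex.
From mathcomp Require Import boolp classical_sets reals constructive_ereal exp.

Set Implicit Arguments.
Unset Strict Implicit.
Unset Printing Implicit Defensive.

Import Order.TTheory GRing.Theory Num.Theory.
Local Open Scope ring_scope.
Local Open Scope complex_scope.

Section QDefs.
Variable R : realType.
Local Notation C := R[i].

Definition adj {m n} (A : 'M[C]_(m, n)) : 'M[C]_(n, m) := (map_mx Num.conj A)^T.

Definition psd {n} (A : 'M[C]_n) : Prop :=
  adj A = A /\ forall v : 'cV[C]_n, 0 <= (adj v *m A *m v) 0 0.

Definition loewner_le {n} (A B : 'M[C]_n) : Prop := psd (B - A).

Definition absmx {n} (X : 'M[C]_n) : 'M[C]_n :=
  match pselect (exists M : 'M[C]_n, psd M /\ M *m M = adj X *m X) with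
  | left h => projT1 (cid h)
  | right _ => 0
  end.

Definition trnorm {n} (X : 'M[C]_n) : R := complex.Re (\tr (absmx X)).

Definition gtd {n} (rho sigma : 'M[C]_n) : R :=
  trnorm (rho - sigma) / 2 + complex.Re `|\tr (rho - sigma)| / 2.

Definition log2 (x : R) : R := ln x / ln 2.

Definition DH_set {n} (eps : R) (rho sigma : 'M[C]_n) : set R :=
  [set r | exists Q : 'M[C]_n,
     [/\ psd Q, loewner_le Q 1%:M, eps%:C <= \tr (Q *m rho)
       & r = complex.Re (\tr (Q *m sigma)) / eps]].

Definition DH {n} (eps : R) (rho sigma : 'M[C]_n) : \bar R :=
  let t := inf (DH_set eps rho sigma) in
  if t == 0 then +oo%E else (- log2 t)%:E.

Definition rhs_bound (lambda x : R) : \bar R :=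
  if 1 - x <= 0 then +oo%E else (log2 lambda - log2 (1 - x))%:E.

End QDefs.

From mathcomp Require Import all_boot all_order all_algebra spectral.
From mathcomp Require Import complex ring.
From mathcomp Require Import boolp classical_sets reals constructive_ereal exp.

Set Implicit Arguments.
Unset Strict Implicit.
Unset Printing Implicit Defensive.

Import Order.TTheory GRing.Theory Num.Theory.
Local Open Scope ring_scope.
Local Open Scope complex_scope.

(* For a test 0 <= Q <= 1, split tr(Q rho) = tr(Q rhobar) + tr(Q (rho - rhobar)).
   The first term is at most lambda tr(Q sigma); the second is at most the positive
   part of rho - rhobar, computed in an eigenbasis of rho - rhobar as
   (||rho - rhobar||_1 + tr(rho - rhobar))/2 <= Delta(rho, rhobar).  Hence every
   feasible test has tr(Q sigma)/eps >= (1 - Delta/eps)/lambda, and taking the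
   infimum and -log2 gives the bound.  To evaluate ||.||_1 in the eigenbasis one
   needs the uniqueness of the positive square root of a nonnegative diagonal
   matrix. *)

Lemma real_mul_le_pos_part (F : numFieldType) (d q : F) :
  d \is Num.real -> 0 <= q <= 1 -> d * q <= (`|d| + d) / 2.
Proof.
move=> d_real /andP[q_ge0 q_le1]; have [d_ge0|d_le0] := real_ge0P d_real.
  by rewrite -mulr2n -(mulr_natr d 2) mulfK ?pnatr_eq0 // ler_piMr.
by rewrite addNr mul0r nmulr_rle0.
Qed.

Section PsdMatrices.
Variable R : realType.
Local Notation C := R[i].

Lemma adjM m n p (A : 'M[C]_(m, n)) (B : 'M[C]_(n, p)) :
  adj (A *m B) = adj B *m adj A.
Proof. by rewrite /adj map_mxM trmx_mul. Qed.

Lemma adjK m n (A : 'M[C]_(m, n)) : adj (adj A) = A.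
Proof. by apply/matrixP=> i j; rewrite !mxE conjCK. Qed.

Lemma adjB m n (A B : 'M[C]_(m, n)) : adj (A - B) = adj A - adj B.
Proof. by apply/matrixP=> i j; rewrite !mxE rmorphB. Qed.

Lemma adj_diag_real n (d : 'rV[C]_n) :
  (forall i, d 0 i \is Num.real) -> adj (diag_mx d) = diag_mx d.
Proof.
move=> d_real; apply/matrixP=> i j; rewrite !mxE.
by case: eqVneq => [->|_]; rewrite ?mulr1n ?mulr0n ?rmorph0 ?conj_Creal.
Qed.

Lemma mul_diag_adj_mxE m n (A : 'M[C]_(m, n)) (d : 'rV[C]_n) j :
  (A *m diag_mx d *m adj A) j j = \sum_k d 0 k * `|A j k| ^+ 2.
Proof.
rewrite mxE; apply: eq_bigr => k _.
by rewrite mul_mx_diag !mxE normCK mulrAC mulrC.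
Qed.

Lemma mul_diag_adj_mx_eq0 m n (A : 'M[C]_(m, n)) (d : 'rV[C]_n) j k :
  (forall k, 0 <= d 0 k) -> (A *m diag_mx d *m adj A) j j = 0 ->
  d 0 k * A j k = 0.
Proof.
move=> d_ge0; rewrite mul_diag_adj_mxE => /psumr_eq0P/(_ k isT).
move=> /(_ (fun k _ => mulr_ge0 (d_ge0 k) (exprn_ge0 _ (normr_ge0 _))))/eqP.
by rewrite mulf_eq0 sqrf_eq0 normr_eq0 => /orP[]/eqP->; rewrite ?mul0r ?mulr0.
Qed.

Lemma psd_diag n (d : 'rV[C]_n) : (forall i, 0 <= d 0 i) -> psd (diag_mx d).
Proof.
move=> d_ge0; split; first by apply: adj_diag_real => i; apply: ger0_real.
move=> v; have := mul_diag_adj_mxE (adj v) d 0; rewrite adjK => ->.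
by apply: sumr_ge0 => i _; rewrite mulr_ge0 ?exprn_ge0.
Qed.

Lemma psd0 n : psd (0 : 'M[C]_n).
Proof.
have -> : (0 : 'M[C]_n) = diag_mx 0 by apply/matrixP=> i j; rewrite !mxE mul0rn.
by apply: psd_diag => i; rewrite mxE.
Qed.

Lemma psd1 n : psd (1%:M : 'M[C]_n).
Proof. by rewrite -diag_const_mx; apply: psd_diag => i; rewrite mxE ler01. Qed.

Lemma psd_conj_diag_ge0 m n (B : 'M[C]_n) (P : 'M[C]_(m, n)) i :
  psd B -> 0 <= (P *m B *m adj P) i i.
Proof.
case=> _ /(_ (adj (row i P))); rewrite adjK.
have -> : adj (row i P) = col i (adj P) by apply/matrixP=> k l; rewrite !mxE.
suff -> : (P *m B *m adj P) i i = (row i (P *m B) *m col i (adj P)) 0 0.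
  by rewrite row_mul.
by rewrite !mxE; apply: eq_bigr => k _; rewrite !mxE.
Qed.

Lemma unitary_conjK m n (P : 'M[C]_(m, n)) (D : 'M[C]_m) :
  P *m adj P = 1%:M -> P *m (adj P *m D *m P) *m adj P = D.
Proof. by move=> PP; rewrite !mulmxA PP mul1mx -mulmxA PP mulmx1. Qed.

Lemma hermitian_spectral n (A : 'M[C]_n) : adj A = A ->
  exists P (d : 'rV[C]_n), [/\ P *m adj P = 1%:M, adj P *m P = 1%:M,
    A = adj P *m diag_mx d *m P & forall i, d 0 i \is Num.real].
Proof.
move=> A_herm.
have /orthomx_spectralP : A \is normalmx.
  by apply/normalmxP; rewrite -map_trmx -/(adj A) A_herm.
set P := spectralmx A; set d := spectral_diag A => eA.
have PP : P *m adj P = 1%:M.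
  by rewrite /adj map_trmx; apply/unitarymxP/spectral_unitarymx.
have invP : invmx P = adj P by rewrite -[LHS]mulmx1 -PP mulKmx ?spectral_unit.
rewrite invP in eA; exists P, d; split => //; first exact: mulmx1C.
move=> i; have /matrixP/(_ i i) : adj (diag_mx d) = diag_mx d.
  have -> : diag_mx d = P *m A *m adj P by rewrite eA unitary_conjK.
  by rewrite !adjM adjK A_herm mulmxA.
by rewrite !mxE eqxx mulr1n CrealE => ->.
Qed.

Lemma mxtrace_mul_spectral n (A B P : 'M[C]_n) (d : 'rV[C]_n) :
  A = adj P *m diag_mx d *m P ->
  \tr (A *m B) = \sum_i d 0 i * (P *m B *m adj P) i i.
Proof.
move=> ->; rewrite -!mulmxA mxtrace_mulC -!mulmxA mul_diag_mx /mxtrace.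
by apply: eq_bigr => i _; rewrite mxE !mulmxA.
Qed.

Lemma psd_spectral_ge0 n (A P : 'M[C]_n) (d : 'rV[C]_n) i :
  psd A -> P *m adj P = 1%:M -> A = adj P *m diag_mx d *m P -> 0 <= d 0 i.
Proof.
move=> A_psd PP eA; have := psd_conj_diag_ge0 P i A_psd.
by rewrite eA unitary_conjK // mxE eqxx mulr1n.
Qed.

Lemma psd_mxtrace_mul_ge0 n (A B : 'M[C]_n) :
  psd A -> psd B -> 0 <= \tr (A *m B).
Proof.
move=> A_psd B_psd; have [P [d [PP _ eA _]]] := hermitian_spectral A_psd.1.
rewrite (mxtrace_mul_spectral _ eA); apply: sumr_ge0 => i _.
by rewrite mulr_ge0 ?(psd_spectral_ge0 _ A_psd PP eA) ?psd_conj_diag_ge0.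
Qed.

Lemma psd_mxtrace_ge0 n (A : 'M[C]_n) : psd A -> 0 <= \tr A.
Proof. by move=> A_psd; rewrite -[A]mulmx1; apply: psd_mxtrace_mul_ge0 (psd1 n). Qed.

Lemma sqrt_diag_comm n (M : 'M[C]_n) (e : 'rV[C]_n) :
  (forall i, 0 <= e 0 i) -> M *m M = diag_mx e *m diag_mx e ->
  M *m diag_mx e = diag_mx e *m M.
Proof.
move=> e_ge0 MM; set E := diag_mx e in MM *.
have /matrixP MEE : M *m E *m E = E *m (E *m M).
  by rewrite -mulmxA -MM [RHS]mulmxA -MM mulmxA.
apply/matrixP=> i j; move: (MEE i j); rewrite /E !mul_mx_diag !mul_diag_mx !mxE.
move=> /eqP; rewrite -subr_eq0.
(* M commutes with M *m M = E *m E; nonnegativity lets us cancel e_j + e_i. *)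
have -> : M i j * e 0 j * e 0 j - e 0 i * (e 0 i * M i j) =
          (e 0 j - e 0 i) * (e 0 j + e 0 i) * M i j by ring.
rewrite !mulf_eq0 subr_eq0 paddr_eq0 // => /orP[/orP[/eqP->|/andP[/eqP-> /eqP->]]|/eqP->].
- by rewrite mulrC.
- by rewrite mulr0 mul0r.
- by rewrite mulr0 mul0r.
Qed.

Lemma psd_sqrt_diag_unique n (M : 'M[C]_n) (e : 'rV[C]_n) :
  psd M -> (forall i, 0 <= e 0 i) -> M *m M = diag_mx e *m diag_mx e ->
  M = diag_mx e.
Proof.
move=> M_psd e_ge0 MM; have ME := sqrt_diag_comm e_ge0 MM.
set E := diag_mx e in MM ME *; have E_psd : psd E by apply: psd_diag.
have [N eM] : {N | M = N + E} by exists (M - E); rewrite subrK.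
have N_herm : adj N = N.
  by rewrite -(addrK E N) -eM adjB M_psd.1 E_psd.1.
have NME : N *m (M + E) = 0.
  by rewrite -(addrK E N) -eM mulmxDr !mulmxBl MM ME addrA subrK subrr.
(* Both terms of N (M + E) N^* = 0 are nonnegative, which forces N E = 0. *)
have NE : N *m E = 0.
  apply/matrixP=> j k; rewrite /E mul_mx_diag !mxE mulrC.
  apply: (mul_diag_adj_mx_eq0 _ e_ge0); apply/eqP.
  have /eqP := congr1 (fun X => (X *m adj N) j j) NME.
  rewrite mulmxDr mulmxDl mul0mx [in X in X == _]mxE [in X in _ == X]mxE.
  by rewrite paddr_eq0 ?psd_conj_diag_ge0 // => /andP[].
have NN : N *m N = 0 by move: NME; rewrite eM mulmxDr mulmxDr NE !addr0.
rewrite eM -[RHS]add0r; congr (_ + _).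
apply/matrixP=> j k; rewrite mxE -[N j k]mul1r.
have -> : (1 : C) = (const_mx 1 : 'rV_n) 0 k by rewrite mxE.
apply: mul_diag_adj_mx_eq0 => [l|]; first by rewrite mxE ler01.
by rewrite diag_const_mx mulmx1 N_herm NN mxE.
Qed.

Lemma psd_conj m n (P : 'M[C]_(m, n)) (A : 'M[C]_n) :
  psd A -> psd (P *m A *m adj P).
Proof.
move=> [A_herm A_ge0]; split; first by rewrite !adjM adjK A_herm mulmxA.
by move=> v; have := A_ge0 (adj P *m v); rewrite adjM adjK !mulmxA.
Qed.

Lemma diag_norm_sq n (d : 'rV[C]_n) : (forall i, d 0 i \is Num.real) ->
  diag_mx (\row_i `|d 0 i|) *m diag_mx (\row_i `|d 0 i|) = diag_mx d *m diag_mx d.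
Proof.
move=> d_real; rewrite !mulmx_diag; congr diag_mx.
by apply/rowP=> i; rewrite !mxE -!expr2 real_normK.
Qed.

Lemma hermitian_psd_sqrt n (X : 'M[C]_n) : adj X = X ->
  exists M : 'M[C]_n, psd M /\ M *m M = adj X *m X.
Proof.
move=> X_herm; have [P [d [PP PP' eX d_real]]] := hermitian_spectral X_herm.
set E := diag_mx (\row_i `|d 0 i|).
exists (adj P *m E *m adj (adj P)); split.
  by apply/psd_conj/psd_diag => i; rewrite mxE.
rewrite adjK X_herm eX -!mulmxA !(mulmxA P (adj P)) PP !mul1mx !mulmxA.
by rewrite -!(mulmxA (adj P)) diag_norm_sq.
Qed.

Lemma absmx_spec n (X : 'M[C]_n) : adj X = X ->
  psd (absmx X) /\ absmx X *m absmx X = adj X *m X.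
Proof.
move=> X_herm; rewrite /absmx; case: pselect => [ex|]; first by case: (cid ex).
by have := hermitian_psd_sqrt X_herm.
Qed.

Lemma mxtrace_psd_sqrt n (X M P : 'M[C]_n) (d : 'rV[C]_n) :
  P *m adj P = 1%:M -> adj P *m P = 1%:M -> X = adj P *m diag_mx d *m P ->
  (forall i, d 0 i \is Num.real) ->
  psd M -> M *m M = adj X *m X -> \tr M = \sum_i `|d 0 i|.
Proof.
move=> PP PP' eX d_real M_psd MM.
have X_herm : adj X = X by rewrite eX !adjM adjK adj_diag_real // mulmxA.
have XX : adj X *m X = adj P *m (diag_mx d *m diag_mx d) *m P.
  by rewrite X_herm eX -!mulmxA (mulmxA P (adj P)) PP mul1mx.
have -> : \tr M = \tr (P *m M *m adj P) by rewrite mxtrace_mulC mulmxA PP' mul1mx.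
have -> : P *m M *m adj P = diag_mx (\row_i `|d 0 i|).
  apply: psd_sqrt_diag_unique => [|i|]; [exact: psd_conj | by rewrite mxE |].
  rewrite diag_norm_sq // -[RHS](unitary_conjK _ PP) -XX -MM.
  by rewrite -!mulmxA (mulmxA (adj P) P) PP' mul1mx.
by rewrite mxtrace_diag; apply: eq_bigr => i _; rewrite mxE.
Qed.

Lemma mxtrace_effect_mul_le n (X Q M : 'M[C]_n) :
  adj X = X -> psd Q -> psd (1%:M - Q) -> psd M -> M *m M = adj X *m X ->
  \tr (Q *m X) <= (\tr M + `|\tr X|) / 2.
Proof.
move=> X_herm Q_psd Q_le1 M_psd MM.
have [P [d [PP PP' eX d_real]]] := hermitian_spectral X_herm.
have trX : \tr X = \sum_i d 0 i.
  by rewrite eX mxtrace_mulC mulmxA PP mul1mx mxtrace_diag.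
have q_bounds i : 0 <= (P *m Q *m adj P) i i <= 1.
  rewrite psd_conj_diag_ge0 //=; have := psd_conj_diag_ge0 P i Q_le1.
  by rewrite mulmxBr mulmxBl mulmx1 PP !mxE eqxx mulr1n subr_ge0.
rewrite mxtrace_mulC (mxtrace_mul_spectral _ eX).
rewrite (mxtrace_psd_sqrt PP PP' eX d_real M_psd MM) trX.
apply: le_trans (_ : \sum_i (`|d 0 i| + d 0 i) / 2 <= _).
  by apply: ler_sum => i _; apply: real_mul_le_pos_part.
rewrite -mulr_suml big_split /= ler_wpM2r ?invr_ge0 ?ler0n // lerD2l.
by apply/real_ler_norm/rpred_sum.
Qed.

End PsdMatrices.

Lemma neg_log2_le (R : realType) (a b t : R) :
  0 < a -> 0 < b -> a / b <= t -> - log2 t <= log2 b - log2 a.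
Proof.
move=> a_gt0 b_gt0 abt; have ab_gt0 : 0 < a / b by rewrite divr_gt0.
have ln2_gt0 : 0 < ln (2 : R) by rewrite ln_gt0 // ltr1n.
rewrite /log2 -mulNr -mulrBl ler_pM2r ?invr_gt0 // lerNl opprB.
have <- : ln (a / b) = ln a - ln b by rewrite lnM ?lnV ?posrE ?invr_gt0.
by rewrite ler_ln ?posrE // (lt_le_trans ab_gt0).
Qed.

Section HypothesisTesting.
Variable R : realType.
Local Notation C := R[i].

Lemma gtdE n (rho rhobar : 'M[C]_n) : adj (rho - rhobar) = rho - rhobar ->
  (gtd rho rhobar)%:C =
  (\tr (absmx (rho - rhobar)) + `|\tr (rho - rhobar)|) / 2.
Proof.
move=> X_herm; have trM_ge0 := psd_mxtrace_ge0 (absmx_spec X_herm).1.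
rewrite /gtd /trnorm rmorphD !rmorphM /= !RRe_real ?ger0_real ?normr_ge0 //.
by rewrite fmorphV rmorph_nat -mulrDl.
Qed.

Lemma mxtrace_effect_le_gtd n (rho rhobar sigma Q : 'M[C]_n) (lambda : R) :
  psd rho -> psd rhobar -> psd Q -> loewner_le Q 1%:M ->
  loewner_le rhobar (lambda%:C *: sigma) ->
  \tr (Q *m rho) <= lambda%:C * \tr (Q *m sigma) + (gtd rho rhobar)%:C.
Proof.
move=> rho_psd rhobar_psd Q_psd Q_le1 rhobar_le.
set X := rho - rhobar.
have X_herm : adj X = X by rewrite adjB rho_psd.1 rhobar_psd.1.
have [M_psd MM] := absmx_spec X_herm.
have -> : \tr (Q *m rho) = \tr (Q *m rhobar) + \tr (Q *m X).
  by rewrite mulmxBr raddfB /= addrC subrK.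
rewrite gtdE //; apply: lerD; last exact: mxtrace_effect_mul_le.
have := psd_mxtrace_mul_ge0 Q_psd rhobar_le.
by rewrite mulmxBr raddfB /= -scalemxAr mxtraceZ subr_ge0.
Qed.

Lemma DH_set_nonempty n (eps : R) (rho sigma : 'M[C]_n) :
  eps%:C <= \tr rho -> (DH_set eps rho sigma !=set0)%classic.
Proof.
move=> eps_le; exists (complex.Re (\tr (1%:M *m sigma)) / eps), 1%:M.
split; rewrite ?mul1mx //; first exact: psd1.
by rewrite /loewner_le subrr; apply: psd0.
Qed.

Lemma DH_set_lbound n (rho rhobar sigma : 'M[C]_n) (lambda eps : R) :
  psd rho -> psd rhobar -> psd sigma ->
  0 < lambda -> loewner_le rhobar (lambda%:C *: sigma) -> 0 < eps ->
  lbound (DH_set eps rho sigma) ((1 - gtd rho rhobar / eps) / lambda).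
Proof.
move=> rho_psd rhobar_psd sigma_psd lambda_gt0 rhobar_le eps_gt0.
move=> _ [Q [Q_psd Q_le1 eps_le ->]].
have s_ge0 : 0 <= \tr (Q *m sigma) by apply: psd_mxtrace_mul_ge0.
have eps_le_sD : eps <= lambda * complex.Re (\tr (Q *m sigma)) + gtd rho rhobar.
  rewrite -lecR rmorphD rmorphM /= (RRe_real (ger0_real s_ge0)).
  exact: le_trans eps_le (mxtrace_effect_le_gtd rho_psd rhobar_psd Q_psd Q_le1 rhobar_le).
move: eps_le_sD; set s := complex.Re _; set D := gtd _ _ => eps_le_sD.
have [eps_neq0 lambda_neq0] := (gt_eqF eps_gt0, gt_eqF lambda_gt0).
rewrite -(@ler_pM2r _ (eps * lambda)) ?mulr_gt0 //.
have -> : (1 - D / eps) / lambda * (eps * lambda) = eps - D.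
  by field; rewrite eps_neq0 lambda_neq0.
have -> : s / eps * (eps * lambda) = lambda * s by field; rewrite eps_neq0.
by rewrite lerBlDr.
Qed.

End HypothesisTesting.

Theorem lemmaA5 (R : realType) (n : nat) (rho rhobar sigma : 'M[R[i]]_n)
  (lambda eps : R) :
  psd rho -> psd rhobar -> psd sigma ->
  0 < lambda -> loewner_le rhobar (lambda%:C *: sigma) ->
  0 < eps -> eps%:C <= \tr rho ->
  (DH eps rho sigma <= rhs_bound lambda (gtd rho rhobar / eps))%E.
Proof.
move=> rho_psd rhobar_psd sigma_psd lambda_gt0 rhobar_le eps_gt0 eps_le.
rewrite /rhs_bound; case: ifPn => [_|]; first exact: leey.
rewrite -ltNge => x_lt1.
have inf_ge := lb_le_inf (DH_set_nonempty sigma eps_le)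
  (DH_set_lbound rho_psd rhobar_psd sigma_psd lambda_gt0 rhobar_le eps_gt0).
have inf_gt0 := lt_le_trans (divr_gt0 x_lt1 lambda_gt0) inf_ge.
by rewrite /DH (gt_eqF inf_gt0) lee_fin neg_log2_le.
Qed.
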